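(* Let $\lambda,d\ge0$ and let $\mu\ge1$ be an integer. Let $u\in\Gamma^*$ be a $\mu$-locally $(\lambda,d)$-quasi-geodesic word in $G$. Then there is a word $v\in\Gamma^*$ of length less than $|\Gamma|^\mu$ such that for all $x,y\in\Gamma^*$ the word $xuy$ is $\mu$-locally $(\lambda,d)$-quasi-geodesic if and only if $xvy$ is $\mu$-locally $(\lambda,d)$-quasi-geodesic. Moreover, if $u\ne v$ then $|v|\ge\mu-1$.
   Context: $G$ is a torsion-free non-elementary $\delta$-hyperbolic group generated by a finite set $\Sigma\subseteq G\setminus\{1\}$; $\Gamma=\Sigma\cup\bar\Sigma$ where $\bar\Sigma=\Sigma^{-1}$ is regarded as a disjoint copy of $\Sigma$, and $\pi:\Gamma^*\to G$ is the canonical morphism. For $w\in\Gamma^*$, $|w|$ is its length and $|w|_G$ is the length of a shortest word $u$ with $\pi(u)=\pi(w)$. A word $w$ is $(\lambda,d)$-quasi-geodesic if every factor $u$ of $w$ satisfies $|u|\le\lambda|u|_G+d$; it is $\mu$-locally $(\lambda,d)$-quasi-geodesic if every factor of $w$ of length at most $\mu$ is $(\lambda,d)$-quasi-geodesic. *)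

From mathcomp Require Import all_boot all_order all_algebra.
From mathcomp Require Export reals.
Set Implicit Arguments. Unset Strict Implicit. Unset Printing Implicit Defensive.
Import Order.TTheory GRing.Theory Num.Theory.
Local Open Scope ring_scope.

Section GroupDefs.
Variables (G : Type) (mul : G -> G -> G) (inv : G -> G) (one : G).

Definition is_group : Prop :=
  [/\ forall a b c, mul a (mul b c) = mul (mul a b) c,
      forall a, mul one a = a, forall a, mul a one = a,
      forall a, mul (inv a) a = one & forall a, mul a (inv a) = one].

Fixpoint gpow (g : G) (n : nat) : G :=
  if n is n'.+1 then mul g (gpow g n') else one.

Definition torsion_free : Prop :=
  forall g n, (0 < n)%N -> gpow g n = one -> g = one.

Definition virtually_cyclic : Prop :=
  exists h : G, exists reps : seq G, forall g, exists2 i, (i < size reps)%N &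
    exists n : nat, g = mul (nth one reps i) (gpow h n) \/
                    g = mul (nth one reps i) (gpow (inv h) n).

(* Generators: Sigma is indexed by a finite type S via an injective map sigma;
   Gamma = Sigma ⊔ Sigma^{-1} is the sum type S + S. *)
Variables (S : finType) (sigma : S -> G).

Definition Gam := (S + S)%type.

Definition letter (a : Gam) : G :=
  match a with inl s => sigma s | inr s => inv (sigma s) end.

Definition piw (w : seq Gam) : G := foldr (fun a g => mul (letter a) g) one w.

Definition generates : Prop := forall g, exists w, piw w = g.

Definition geo_len (g : G) (n : nat) : Prop :=
  (exists w, size w = n /\ piw w = g) /\ (forall w, piw w = g -> (n <= size w)%N).

Definition gdist (g h : G) (n : nat) : Prop := geo_len (mul (inv g) h) n.

(* delta-hyperbolicity via the Gromov four-point condition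
   (x|y)_w >= min((x|z)_w, (y|z)_w) - delta, with
   (x|y)_w = (d(w,x) + d(w,y) - d(x,y)) / 2. *)
Definition hyperbolic (R : realType) (delta : R) : Prop :=
  forall w x y z (dwx dwy dwz dxy dxz dyz : nat),
    gdist w x dwx -> gdist w y dwy -> gdist w z dwz ->
    gdist x y dxy -> gdist x z dxz -> gdist y z dyz ->
    let gp a b c : R := (a%:R + b%:R - c%:R) / 2 in
    Num.min (gp dwx dwz dxz) (gp dwy dwz dyz) - delta <= gp dwx dwy dxy.

Definition is_factor (u w : seq Gam) : Prop := exists x y, w = x ++ u ++ y.

Definition quasi_geodesic (R : realType) (lam d : R) (w : seq Gam) : Prop :=
  forall u, is_factor u w -> forall n, geo_len (piw u) n ->
    (size u)%:R <= lam * n%:R + d.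

Definition loc_quasi_geodesic (R : realType) (mu : nat) (lam d : R)
    (w : seq Gam) : Prop :=
  forall u, is_factor u w -> (size u <= mu)%N -> quasi_geodesic lam d u.

End GroupDefs.

(* Being mu-locally (lam, d)-quasi-geodesic only constrains the factors of
   length at most mu = m + 1.  If u has two occurrences p1 w r1 = p2 w r2 of a
   factor w of length m, then for all x, y the short factors of x u y and of
   x (p1 w r2) y agree, up to factors of u itself: a factor of length at most
   m + 1 cannot straddle w.  There are only |Gamma|^m words of length m, so
   every u with |u| >= |Gamma|^(m+1) has such a repetition, and iterating the
   deletion yields v; each deletion keeps the prefix p1 w, whence |v| >= m
   unless nothing was deleted. *)
From mathcomp Require Import all_boot all_algebra.
From mathcomp Require Import reals zify.
Set Implicit Arguments. Unset Strict Implicit.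

Section LocalProperties.
Variable T : eqType.
Implicit Types s w x y f : seq T.

Lemma infix_take_cat a f b n : (size (a ++ f) <= n)%N -> infix f (take n (a ++ f ++ b)).
Proof.
move=> le_n; rewrite catA take_cat ltnNge le_n /=.
exact/infix_catr/suffix_infix.
Qed.

Lemma infix_drop_cat a f b n : (n <= size a)%N -> infix f (drop n (a ++ f ++ b)).
Proof.
move=> le_n; rewrite drop_cat; case: ltnP => [_|ge_n]; first exact: infix_infix.
by rewrite (_ : n - size a = 0)%N ?drop0 ?prefix_infix //; lia.
Qed.

Lemma infix_cat_short f s1 s2 s3 :
  infix f (s1 ++ s2 ++ s3) -> (size f <= (size s2).+1)%N ->
  infix f (s1 ++ s2) || infix f (s2 ++ s3).
Proof.
move=> /infixP[a [b E]] short.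
case: (leqP (size (a ++ f)) (size (s1 ++ s2))) => [left_end|right_end].
  by have := infix_take_cat b left_end; rewrite -E catA take_size_cat // => ->.
case: (leqP (size s1) (size a)) => [right_start|left_start].
  by have := infix_drop_cat f b right_start; rewrite -E drop_size_cat // => ->; rewrite orbT.
by move: right_end; rewrite !size_cat; lia.
Qed.

Definition locally (P : seq T -> Prop) (n : nat) w : Prop :=
  forall f, infix f w -> (size f <= n)%N -> P f.

Variable P : seq T -> Prop.

Lemma locally_cut m p1 p2 w r1 r2 u :
  size w = m -> (size p1 <= size p2)%N ->
  u = p1 ++ w ++ r1 -> u = p2 ++ w ++ r2 -> locally P m.+1 u ->
  forall x y, locally P m.+1 (x ++ u ++ y) <-> locally P m.+1 (x ++ (p1 ++ w ++ r2) ++ y).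
Proof.
move=> <- le_p Eu1 Eu2 Pu x y.
have /prefixP[z Ez] : prefix (p1 ++ w) (p2 ++ w).
  rewrite prefixE.
  have -> : p2 ++ w = take (size (p2 ++ w)) u by rewrite Eu2 catA take_size_cat.
  rewrite take_takel; last by rewrite !size_cat leq_add2r.
  by rewrite Eu1 catA take_size_cat.
have Exuy : x ++ u ++ y = (x ++ p2) ++ w ++ (r2 ++ y) by rewrite Eu2 -!catA.
have Exvy : x ++ (p1 ++ w ++ r2) ++ y = (x ++ p1) ++ w ++ (r2 ++ y) by rewrite -!catA.
split=> Pxy f f_infix short.
- apply: (Pxy f _ short).
  move: f_infix; rewrite Exvy => /infix_cat_short/(_ short)/orP[] f_infix.
    by apply: infix_trans f_infix _; apply/prefixW/prefixP; exists (r1 ++ y); rewrite Eu1 -!catA.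
  by apply: infix_trans f_infix _; rewrite Exuy; apply: suffix_infix.
- move: f_infix; rewrite Exuy => /infix_cat_short/(_ short)/orP[] f_infix; last first.
    by apply: (Pxy f _ short); apply: infix_trans f_infix _; rewrite Exvy; apply: suffix_infix.
  move: f_infix; rewrite -catA Ez -!catA catA => /infix_cat_short/(_ short)/orP[] f_infix.
    apply: (Pxy f _ short); apply: infix_trans f_infix _.
    by apply/prefixW/prefixP; exists (r2 ++ y); rewrite -!catA.
  apply: (Pu f _ short); apply: infix_trans f_infix _.
  by apply/infixP; exists p1, r2; rewrite Eu2 catA Ez -!catA.
Qed.

End LocalProperties.

Lemma repeated_infix (T : finType) m (u : seq T) :
  (#|T| ^ m + m <= size u)%N ->
  exists p1 p2 w r1 r2, [/\ size w = m, (size p1 < size p2)%N,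
    u = p1 ++ w ++ r1 & u = p2 ++ w ++ r2].
Proof.
move=> long; set n := (size u - m).+1.
pose window i := take m (drop i u).
have size_window i : (i < n)%N -> size (window i) = m.
  by move=> lt_i; rewrite size_takel // size_drop; lia.
have windows_tuples : {subset map window (iota 0 n) <= map val (enum {: m.-tuple T})}.
  move=> w /mapP[i]; rewrite mem_iota => /andP[_ lt_i] ->.
  by apply/mapP; exists (Tuple (introT eqP (size_window i lt_i))); rewrite ?mem_enum.
have /(uniqPn [::])[i [j [lt_ij]]] : ~~ uniq (map window (iota 0 n)).
  apply/negP => /uniq_leq_size/(_ windows_tuples).
  by rewrite !size_map -enumT -cardE card_tuple size_iota; lia.
rewrite size_map size_iota => lt_j; have lt_i := ltn_trans lt_ij lt_j.
rewrite !(nth_map 0%N) ?size_iota ?nth_iota // => same_window.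
exists (take i u), (take j u), (window i), (drop m (drop i u)), (drop m (drop j u)).
split; first exact: size_window.
- by rewrite !size_takel //; lia.
- by rewrite !cat_take_drop.
- by rewrite same_window !cat_take_drop.
Qed.

Lemma locally_short_representative (T : finType) (P : seq T -> Prop) m u :
  (1 < #|T|)%N -> locally P m.+1 u ->
  exists v, [/\ (size v < #|T| ^ m.+1)%N,
    forall x y, locally P m.+1 (x ++ u ++ y) <-> locally P m.+1 (x ++ v ++ y) &
    u <> v -> (m <= size v)%N].
Proof.
move=> card_T; have [n] := ubnP (size u); elim: n u => // n IH u lt_un Pu.
case: (ltnP (size u) (#|T| ^ m.+1)) => [short|long]; first by exists u.
have /repeated_infix[p1 [p2 [w [r1 [r2 [size_w lt_p Eu1 Eu2]]]]]] :
    (#|T| ^ m + m <= size u)%N.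
  have := ltn_expl m card_T; have := leq_mul2r (#|T| ^ m) 2 #|T|.
  by move: long; rewrite card_T orbT expnS; lia.
have cut_equiv := locally_cut size_w (ltnW lt_p) Eu1 Eu2 Pu.
have Pu' : locally P m.+1 (p1 ++ w ++ r2).
  by have := (cut_equiv [::] [::]).1; rewrite /= !cats0; apply.
have size_u' : (size (p1 ++ w ++ r2) < n)%N.
  by move: lt_un; rewrite Eu2 !size_cat ltnS; apply: leq_trans; rewrite ltn_add2r.
have [v [short equiv long_v]] := IH _ size_u' Pu'.
exists v; split=> // [x y|_]; first by rewrite cut_equiv.
have [<-|] := eqVneq (p1 ++ w ++ r2) v; last by move/eqP; apply: long_v.
by rewrite !size_cat size_w; lia.
Qed.

Lemma loc_quasi_geodesicE (R : realType) (G : Type) (mul : G -> G -> G) (inv : G -> G)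
    (one : G) (S : finType) (sigma : S -> G) (lam d : R) mu (w : seq (Gam S)) :
  loc_quasi_geodesic mul inv one sigma mu lam d w <->
  locally (quasi_geodesic mul inv one sigma lam d) mu w.
Proof. by split=> qg f /infixP; apply: qg. Qed.

Lemma generators_nonempty (G : Type) (mul : G -> G -> G) (inv : G -> G) (one : G)
    (S : finType) (sigma : S -> G) :
  is_group mul inv one -> generates mul inv one sigma ->
  ~ virtually_cyclic mul inv one -> (0 < #|S|)%N.
Proof.
move=> [_ mul1g _ _ _] gen not_vc; rewrite lt0n; apply/negP => /eqP /card0_eq S0.
apply: not_vc; exists one, [:: one] => g; exists 0%N => //; exists 0%N; left.
have [[|[s|s] w] <-] := gen g; first by rewrite /= mul1g.
all: by have := S0 s; rewrite !inE.
Qed.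

Local Open Scope ring_scope.

Theorem mainTheorem6 (R : realType)
  (G : Type) (mul : G -> G -> G) (inv : G -> G) (one : G)
  (S : finType) (sigma : S -> G)
  (Hgrp : is_group mul inv one)
  (Htf : torsion_free mul one)
  (Hne : ~ virtually_cyclic mul inv one)
  (Hhyp : exists delta : R, 0 <= delta /\ hyperbolic mul inv one sigma delta)
  (Hinj : injective sigma)
  (Hnot1 : forall s, sigma s <> one)
  (Hgen : generates mul inv one sigma)
  (lam d : R) (mu : nat) (Hlam : 0 <= lam) (Hd : 0 <= d) (Hmu : (1 <= mu)%N)
  (u : seq (Gam S))
  (Hu : loc_quasi_geodesic mul inv one sigma mu lam d u) :
  exists v : seq (Gam S),
    (size v < #|{: Gam S}| ^ mu)%N /\
    (forall x y : seq (Gam S),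
       loc_quasi_geodesic mul inv one sigma mu lam d (x ++ u ++ y) <->
       loc_quasi_geodesic mul inv one sigma mu lam d (x ++ v ++ y)) /\
    (u <> v -> (mu - 1 <= size v)%N).
Proof.
have card_Gam : (1 < #|{: Gam S}|)%N.
  by rewrite card_sum; have := generators_nonempty Hgrp Hgen Hne; lia.
case: mu Hmu Hu => // m _ /loc_quasi_geodesicE Hu.
have [v [short equiv long]] := locally_short_representative card_Gam Hu.
exists v; split=> //; split; last by rewrite subn1.
by move=> x y; rewrite !loc_quasi_geodesicE.
Qed.
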